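(* Let $f\in\mathbb{R}[x,y]$ be a polynomial of degree $n\ge 3$ with homogeneous decomposition $f=\sum_{i=0}^n f_i$. If $f_n$ is hyperbolic or elliptic, then the Hessian curve $\{(x,y)\in\mathbb{R}^2:\mathrm{Hess}\,f(x,y)=0\}$ is compact. Moreover, the set $b^-\cap\mathbb{R}^2$ is hyperbolic (i.e. $\mathrm{Hess}\,f<0$ at each of its points) if $f_n$ is hyperbolic, and elliptic (i.e. $\mathrm{Hess}\,f>0$ at each of its points) if $f_n$ is elliptic.
   Context: $f_i$ denotes the homogeneous part of degree $i$ of $f$. $\mathrm{Hess}\,g=g_{xx}g_{yy}-g_{xy}^2$. A homogeneous polynomial $g\in\mathbb{R}[x,y]$ is hyperbolic (resp. elliptic) if $\mathrm{Hess}\,g$ has no real linear factors and is $\le 0$ (resp. $\ge 0$) everywhere on $\mathbb{R}^2$. Let $H_f\in\mathbb{R}[x,y,z]$ be the homogenization of $\mathrm{Hess}\,f$, i.e. $H_f(x,y,z)=z^{2n-4}\,\mathrm{Hess}\,f(x/z,y/z)$, a homogeneous polynomial of even degree $2n-4$ with $H_f(x,y,0)=\mathrm{Hess}\,f_n(x,y)$; its zero set in $\mathbb{RP}^2$ is the projective Hessian curve of $f$, and $\mathbb{R}^2$ is identified with $\{z\neq 0\}\subset\mathbb{RP}^2$ via $(x,y)\mapsto[x:y:1]$. The complement in $\mathbb{RP}^2$ of the projective Hessian curve is the disjoint union of two open sets $b^+$ and $b^-$, on each of which $H_f$ has constant sign, the two signs being opposite, where $b^+$ is orientable and $b^-$ is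 nonorientable. *)

From HB Require Import structures.
From mathcomp Require Import all_boot all_order all_algebra.
From mathcomp Require Import mpoly.
From mathcomp Require Import all_classical all_reals all_analysis.
Set Implicit Arguments. Unset Strict Implicit. Unset Printing Implicit Defensive.
Import Order.TTheory GRing.Theory Num.Theory.
Import numFieldNormedType.Exports.
Local Open Scope classical_set_scope.
Local Open Scope ring_scope.

Section Defs.
Variable R : realType.

(* real polynomials in two variables x = 'X_0, y = 'X_1 *)
Definition poly2 := {mpoly R[2]}.

Definition vx : 'I_2 := @Ordinal 2 0 isT.
Definition vy : 'I_2 := @Ordinal 2 1 isT.

Definition ev2 (g : poly2) (a b : R) : R :=
  meval (fun i : 'I_2 => if val i == 0%N then a else b) g.

(* msize2 g = 1 + total degree of g (0 if g = 0) *)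
Definition msize2 (g : poly2) : nat := msize g.

Definition deg2 (g : poly2) : nat := (msize2 g).-1.

Definition hpart (g : poly2) (i : nat) : poly2 :=
  \sum_(m <- msupp g | mdeg m == i) mcoeff m g *: mpolyX R m.

Definition Hess (g : poly2) : poly2 :=
  mderiv vx (mderiv vx g) * mderiv vy (mderiv vy g)
  - (mderiv vx (mderiv vy g)) ^+ 2.

Definition has_real_linear_factor (h : poly2) : Prop :=
  exists l q : poly2, msize2 l = 2%N /\ h = l * q.

Definition hyperbolic (g : poly2) : Prop :=
  ~ has_real_linear_factor (Hess g) /\ forall a b : R, ev2 (Hess g) a b <= 0.

Definition elliptic (g : poly2) : Prop :=
  ~ has_real_linear_factor (Hess g) /\ forall a b : R, 0 <= ev2 (Hess g) a b.

(* H_f(x,y,z) = z^(2n-4) Hess f (x/z, y/z), extended by Hess f_n(x,y) at z = 0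
   (this is the polynomial function of the homogenization of Hess f). *)
Definition Hf (f : poly2) (v : R * R * R) : R :=
  let: (a, b, c) := v in
  let n := deg2 f in
  if c != 0 then c ^+ (2 * n - 4) * ev2 (Hess f) (a / c) (b / c)
  else ev2 (Hess (hpart f n)) a b.

(* A set U of nonzero vectors of R^3 invariant under nonzero scaling represents a
   subset of RP^2.  Such an (open) subset of RP^2 is nonorientable iff it contains
   an orientation-reversing loop, i.e. a loop whose lift to S^2 (equivalently to
   R^3 \ 0) joins a vector v to its antipode -v. *)
Definition nonorientable (U : set (R * R * R)) : Prop :=
  exists g : R -> R * R * R,
    {within `[0, 1], continuous g} /\
    (forall t, 0 <= t <= 1 -> U (g t)) /\
    (g 1).1.1 = - (g 0).1.1 /\ (g 1).1.2 = - (g 0).1.2 /\ (g 1).2 = - (g 0).2.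

Definition orientable (U : set (R * R * R)) : Prop := ~ nonorientable U.

(* The complement of the projective Hessian curve is {s H_f > 0} U {-s H_f > 0}
   for s = +-1; b^- is the nonorientable one and b^+ the orientable one. *)
Definition bminus_sign (f : poly2) (s : R) : Prop :=
  (s = 1 \/ s = -1) /\
  nonorientable [set v | 0 < s * Hf f v] /\
  orientable [set v | 0 < - s * Hf f v].

Definition bminus (f : poly2) : set (R * R * R) :=
  [set v | exists s, bminus_sign f s /\ 0 < s * Hf f v].

Definition hessian_curve (f : poly2) : set (R * R) :=
  [set p | ev2 (Hess f) p.1 p.2 = 0].

End Defs.

(* Write [f = f_n + g] with [deg g < n].  Then [Hess f = Hess f_n + E], where
   [Hess f_n] is homogeneous of degree [2n - 4] and [deg E <= 2n - 5].  A binary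
   form vanishing at a point [v <> 0] is divisible by the linear form vanishing
   at [v], so [Hess f_n], having no real linear factor, vanishes only at the
   origin.  By compactness, [|Hess f_n v| >= eps |v|^(2n-4)] in the max norm,
   which beats [|E v| = O(|v|^(2n-5))]: the affine Hessian curve is bounded, and
   it is closed.
   On the line at infinity [H_f] restricts to [Hess f_n], which has a constant
   sign there.  That line carries an orientation-reversing loop, so the region
   where [H_f] has this sign is nonorientable, hence is [b^-]; at affine points
   [H_f] is [Hess f]. *)

From mathcomp Require Import all_boot all_order all_algebra.
From mathcomp Require Import mpoly.
From mathcomp Require Import all_classical all_reals all_analysis.
From mathcomp Require Import ring lra zify.
Set Implicit Arguments.
Unset Strict Implicit.
Unset Printing Implicit Defensive.

Import Order.TTheory GRing.Theory Num.Theory.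
Import numFieldNormedType.Exports.
Local Open Scope ring_scope.

Section DegreeBounds.
Context {n : nat} {R : idomainType}.
Implicit Types (p q : {mpoly R[n]}) (i : 'I_n).

Lemma msize_leP p k : reflect {in msupp p, forall m, mdeg m < k}%N (msize p <= k)%N.
Proof.
rewrite msizeE; apply: (iffP (bigmax_leqP_seq _ _ _ _)) => h m /h //.
by apply.
Qed.

Lemma msupp_mderiv i p m : m \in msupp (mderiv i p) -> (m + U_(i))%MM \in msupp p.
Proof.
rewrite !mcoeff_msupp mcoeff_mderiv; apply: contra => /eqP ->.
by rewrite mul0rn.
Qed.

Lemma msize_mderiv i p : (msize (mderiv i p) <= (msize p).-1)%N.
Proof.
apply/msize_leP => m /msupp_mderiv /msize_mdeg_lt.
by rewrite mdegD mdeg1 addn1 ltn_predRL.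
Qed.

Lemma dhomog_mderiv d i p : p \is d.-homog -> mderiv i p \is d.-1.-homog.
Proof.
move=> /dhomogP hp; apply/dhomogP => m /msupp_mderiv /hp.
by rewrite [X in X = _ -> _]mdegD mdeg1 addn1 => <-.
Qed.

Lemma msizeM_le_pred p q : (msize (p * q) <= (msize p + msize q).-1)%N.
Proof.
have [->|p0] := eqVneq p 0; first by rewrite mul0r msize0.
have [->|q0] := eqVneq q 0; first by rewrite mulr0 msize0.
by rewrite msizeM.
Qed.

End DegreeBounds.

Section Hessian.
Context {R : realType}.
Implicit Types (p q r s : {mpoly R[2]}) (i j k l : 'I_2).

Lemma dhomog_hpart p d : hpart p d \is d.-homog.
Proof. exact: pihomogP. Qed.

Lemma msize_sub_hpart p d : msize p = d.+1 -> (msize (p - hpart p d)%R <= d)%N.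
Proof.
move=> sp.
have -> : p - hpart p d = \sum_(m <- msupp p | mdeg m != d) p@_m *: 'X_[m].
  by rewrite {1}[p]mpolyE (bigID (fun m => mdeg m == d)) /= addrC addrK.
apply/msize_leP => m /msupp_sum_le /flattenP [s /mapP [k]].
rewrite mem_filter => /andP [kd /msize_mdeg_lt] + -> /msuppZ_le.
rewrite msuppX inE sp ltnS leq_eqVlt (negbTE kd) => ? /eqP -> //.
Qed.

Lemma dhomog_Hess p d : p \is d.-homog -> Hess p \is (d.-2 + d.-2).-homog.
Proof.
move=> hp; have D i j : mderiv i (mderiv j p) \is d.-2.-homog.
  by do 2 apply: dhomog_mderiv.
by rewrite /Hess rpredB ?expr2 ?dhomogM.
Qed.

Lemma msize_HessD_sub p q d : (msize p <= d.+1)%N -> (msize q <= d)%N ->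
  (msize (Hess (p + q) - Hess p)%R <= d.-2 + d.-2)%N.
Proof.
move=> sp sq.
have D r i j : (msize (mderiv i (mderiv j r)) <= (msize r).-2)%N.
  apply: leq_trans (msize_mderiv _ _) _.
  by rewrite -!subn1 leq_sub2r // subn1 msize_mderiv.
have M r s i j k l : (msize r <= d.+1)%N -> (msize s <= d)%N ->
    (msize (mderiv i (mderiv j r) * mderiv k (mderiv l s))%R <= d.-2 + d.-2)%N.
  move=> sr ss; apply: leq_trans (msizeM_le_pred _ _) _.
  move: sr ss (D r i j) (D s k l); rewrite -!subn1.
  move: (msize r) (msize s) (msize (mderiv i _)) (msize (mderiv k _)); lia.
have add_le (k : nat) r s :
    (msize r <= k)%N -> (msize s <= k)%N -> (msize (r + s)%R <= k)%N.
  by move=> sr ss; rewrite (leq_trans (msizeD_le _ _)) // geq_max sr.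
have -> : Hess (p + q) - Hess p =
    mderiv vx (mderiv vx p) * mderiv vy (mderiv vy q)
  + mderiv vy (mderiv vy p) * mderiv vx (mderiv vx q)
  + mderiv vx (mderiv vx q) * mderiv vy (mderiv vy q)
  - (mderiv vx (mderiv vy p) * mderiv vx (mderiv vy q) *+ 2
     + mderiv vx (mderiv vy q) * mderiv vx (mderiv vy q)).
  by rewrite /Hess !mderivD; ring.
have sq' : (msize q <= d.+1)%N by apply: leqW.
by rewrite !add_le ?msizeN ?add_le ?mulr2n ?add_le //; apply: M.
Qed.

End Hessian.

Lemma meval_dhomog {n : nat} {R : comNzRingType} d (p : {mpoly R[n]}) v t :
  p \is d.-homog -> meval (fun k => t * v k) p = t ^+ d * meval v p.
Proof.
move=> /dhomogP hp; rewrite !mevalE mulr_sumr !big_seq; apply: eq_bigr => m /hp hm.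
under eq_bigr do rewrite exprMn.
by rewrite big_split /= prodrXr -mdegE hm mulrCA.
Qed.

Lemma meval_norm_le {n : nat} {R : realDomainType} d (p : {mpoly R[n]}) v N :
  (msize p <= d.+1)%N -> 1 <= N -> (forall k, `|v k| <= N) ->
  `|meval v p| <= (\sum_(m <- msupp p) `|p@_m|) * N ^+ d.
Proof.
move=> /msize_leP sp N1 vN; rewrite mevalE mulr_suml.
apply: le_trans (ler_norm_sum _ _ _) _.
rewrite !big_seq; apply: ler_sum => m /sp md.
rewrite normrM ler_wpM2l // normr_prod.
apply: (@le_trans _ _ (\prod_(k < n) N ^+ m k)).
  apply: ler_prod => k _; rewrite normr_ge0 normrX lerXn2r ?nnegrE //.
  exact: le_trans (normr_ge0 _) (vN k).
by rewrite -expr_sum -mdegE ler_weXn2l.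
Qed.

Lemma meval_continuous {n : nat} {R : realType} {T : topologicalType}
    (w : T -> 'I_n -> R) (p : {mpoly R[n]}) :
  (forall k, continuous (fun t => w t k)) -> continuous (fun t => meval (w t) p).
Proof.
move=> wc; under eq_fun do rewrite mevalE.
apply: continuous_big => [|m _]; first exact: add_continuous.
move=> t; apply: cvgM; first exact: cvg_cst.
apply: continuous_big => [|k _ {}t]; first exact: mul_continuous.
by have := continuous_comp (wc k t) (@exprn_continuous R (m k) (w t k)).
Qed.

Lemma ord2_other (i j k : 'I_2) : i != j -> k != i -> k = j.
Proof.
by move: i j k => [[|[|//]] ?] [[|[|//]] ?] [[|[|//]] ?] //= _ _; apply: val_inj.
Qed.

Section LinearFactor.
Context {R : realType}.
Implicit Types (p q r : {mpoly R[2]}) (i j : 'I_2) (v : 'I_2 -> R).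

Lemma mpolyX_ord2 i j m : i != j -> 'X_[m] = 'X_i ^+ m i * 'X_j ^+ m j :> {mpoly R[2]}.
Proof.
move=> ij; rewrite mpolyXE_id (bigD1 i) // (bigD1 j) 1?eq_sym //= big1 ?mulr1 //.
by move=> k /andP [ki kj]; rewrite (ord2_other ij ki) eqxx in kj.
Qed.

Lemma polyfun_eq0 (u : {poly R}) : (forall x, u.[x] = 0) -> u = 0.
Proof.
move=> u0; apply/eqP; apply: contraT => nz.
have := max_poly_roots nz (rs := [seq k%:R | k <- iota 0 (size u)]).
rewrite size_map size_iota ltnn; apply; first by apply/allP => x _; apply/rootP.
by rewrite map_inj_uniq ?iota_uniq // => x y /eqP; rewrite eqr_nat => /eqP.
Qed.

Lemma meval_horner_alg v i (u : {poly R}) :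
  meval v (horner_alg ('X_i : {mpoly R[2]}) u) = u.[v i].
Proof.
elim/poly_ind: u => [|u c IH]; first by rewrite rmorph0 meval0 horner0.
rewrite rmorphD rmorphM /= horner_algC horner_algX hornerMXaddC.
by rewrite mevalD mevalM mevalXU mevalZ meval1 mulr1 IH.
Qed.

Lemma mpoly_div_linear i j t p : i != j ->
  exists r (u : {poly R}), p = ('X_j - t *: 'X_i) * r + horner_alg 'X_i u.
Proof.
move=> ij; rewrite [p]mpolyE; elim: (msupp p) => [|m s [r [u IH]]].
  by exists 0, 0; rewrite big_nil mulr0 rmorph0 addr0.
pose l := ('X_j - t *: 'X_i : {mpoly R[2]}).
pose w := \sum_(k < m j) 'X_j ^+ ((m j).-1 - k) * (t *: 'X_i) ^+ k.
have Xj : 'X_j ^+ m j = l * w + (t *: 'X_i) ^+ m j by rewrite -subrXX subrK.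
exists (p@_m *: ('X_i ^+ m i * w) + r), ((p@_m * t ^+ m j)%:P * 'X^(m i + m j) + u).
rewrite big_cons IH (mpolyX_ord2 m ij) Xj rmorphD rmorphM /= horner_algC rmorphXn /=.
by rewrite horner_algX exprZn exprD /l -!mul_mpolyC; ring.
Qed.

Lemma msize_linear_form i j t : i != j -> msize ('X_j - t *: 'X_i : {mpoly R[2]}) = 2.
Proof.
move=> ij; apply/eqP; rewrite eqn_leq; apply/andP; split.
  rewrite (leq_trans (msizeD_le _ _)) // msizeN geq_max msizeX mdeg1.
  by rewrite (leq_trans (msizeZ_le _ _)) // msizeX mdeg1.
suff : U_(j)%MM \in msupp ('X_j - t *: 'X_i : {mpoly R[2]}).
  by move/msize_mdeg_lt; rewrite mdeg1.
rewrite mcoeff_msupp mcoeffB mcoeffZ !mcoeffXU eqxx eq_sym (negbTE ij).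
by rewrite mulr0 subr0 eq_sym oner_neq0.
Qed.

(* Dividing by [X_j - (v j / v i) X_i] leaves a remainder in [X_i] alone,
   which vanishes on the whole line through [v] since [q] is homogeneous. *)
Lemma dhomog_root_linear_factor q d i j v : i != j -> q \is d.-homog ->
  v i != 0 -> meval v q = 0 -> has_real_linear_factor q.
Proof.
move=> ij hq vi0 qv0; set t := v j / v i.
have [r [u qE]] := mpoly_div_linear t q ij.
exists ('X_j - t *: 'X_i), r; split; first exact: msize_linear_form.
suff u0 : u = 0 by rewrite qE u0 rmorph0 addr0.
apply: polyfun_eq0 => x.
have : meval (fun k => x / v i * v k) q = 0 by rewrite (meval_dhomog _ _ hq) qv0 mulr0.
rewrite qE mevalD mevalM mevalB mevalZ !mevalXU meval_horner_alg divfK //.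
have -> : x / v i * v j - t * x = 0 by rewrite /t; field.
by rewrite mul0r add0r.
Qed.

Lemma no_linear_factor_meval_neq0 q d v :
  q \is d.-homog -> ~ has_real_linear_factor q ->
  (exists k, v k != 0) -> meval v q != 0.
Proof.
move=> hq nofactor [k vk]; apply/eqP => qv0; apply: nofactor.
have [kx|/(ord2_other (isT : vx != vy)) ky] := eqVneq k vx.
  by rewrite kx in vk; exact: (dhomog_root_linear_factor (isT : vx != vy) hq vk).
by rewrite ky in vk; exact: (dhomog_root_linear_factor (isT : vy != vx) hq vk).
Qed.

Lemma no_linear_factor_ev2_neq0 q d a b :
  q \is d.-homog -> ~ has_real_linear_factor q ->
  (a != 0) || (b != 0) -> ev2 q a b != 0.
Proof.
move=> hq nofactor ab; apply: (no_linear_factor_meval_neq0 hq nofactor).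
by case/orP: ab => ?; [exists vx | exists vy].
Qed.

End LinearFactor.

Section LowerBound.
Context {R : realType}.
Implicit Types (q : {mpoly R[2]}) (i j : 'I_2) (v : 'I_2 -> R).

Lemma dhomog_lower_bound_at q d i j : i != j -> q \is d.-homog ->
  (forall v, (exists k, v k != 0) -> meval v q != 0) ->
  exists2 eps, 0 < eps &
    forall v, `|v j| <= `|v i| -> eps * `|v i| ^+ d <= `|meval v q|.
Proof.
move=> ij hq qnz; pose chart t k := if k == i then 1 else t : R.
have chart_cont : continuous (fun t => `|meval (chart t) q|).
  move=> t; apply: (continuous_comp _ (@norm_continuous _ R^o _)).
  by apply: meval_continuous => k s; rewrite /chart; case: eqP => _;
    [exact: cvg_cst | exact: cvg_id].
have m11 : -1 <= 1 :> R by lra.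
have [t0 _ t0min] := EVT_min m11 (continuous_subspaceT chart_cont).
exists `|meval (chart t0) q|.
  by rewrite normr_gt0 qnz //; exists i; rewrite /chart eqxx oner_neq0.
move=> v vji; set t := v j / v i.
(* if [v i = 0] then [v = 0] and [t = 0], by the convention [x / 0 = 0] *)
have vE : v =1 (fun k => v i * chart t k).
  move=> k; rewrite /chart.
  case: eqVneq => [->|/(ord2_other ij) ->]; first by rewrite mulr1.
  have [vi0|vi0] := eqVneq (v i) 0; last by rewrite /t mulrC divfK.
  by move: vji; rewrite vi0 normr0 normr_le0 mul0r => /eqP.
rewrite (meval_eq q vE) (meval_dhomog _ _ hq) normrM normrX mulrC ler_wpM2l //.
apply: t0min; rewrite in_itv /= -ler_norml /t normrM.
have [->|vi0] := eqVneq (v i) 0; first by rewrite invr0 normr0 mulr0.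
by rewrite normrV ?unitfE // ler_pdivrMr ?normr_gt0 // mul1r.
Qed.

Lemma dhomog_lower_bound q d : q \is d.-homog ->
  (forall v, (exists k, v k != 0) -> meval v q != 0) ->
  exists2 eps, 0 < eps & forall v i,
    (forall k, `|v k| <= `|v i|) -> eps * `|v i| ^+ d <= `|meval v q|.
Proof.
move=> hq qnz.
have [ex ex0 lbx] := dhomog_lower_bound_at (isT : vx != vy) hq qnz.
have [ey ey0 lby] := dhomog_lower_bound_at (isT : vy != vx) hq qnz.
exists (Num.min ex ey) => [|v i vi]; first by rewrite lt_min ex0 ey0.
have le_min e k : Num.min ex ey <= e -> e * `|v k| ^+ d <= `|meval v q| ->
    Num.min ex ey * `|v k| ^+ d <= `|meval v q|.
  by move=> me; apply: le_trans; rewrite ler_wpM2r ?exprn_ge0.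
have [ix|/(ord2_other (isT : vx != vy)) iy] := eqVneq i vx.
  by rewrite ix in vi *; apply: (le_min ex); rewrite ?ge_min ?lexx ?lbx.
by rewrite iy in vi *; apply: (le_min ey); rewrite ?ge_min ?lexx ?orbT ?lby.
Qed.

Lemma exists_max_coord v : exists i, forall k, `|v k| <= `|v i|.
Proof.
have [h|h] := leP `|v vy| `|v vx|; [exists vx | exists vy] => k;
  have [->|/(ord2_other (isT : vx != vy)) ->] := eqVneq k vx => //; exact: ltW.
Qed.

Lemma dominant_dhomog_zeros_bounded q e d : q \is d.+1.-homog ->
  (forall v, (exists k, v k != 0) -> meval v q != 0) -> (msize e <= d.+1)%N ->
  exists M, forall v, meval v (q + e) = 0 -> forall k, `|v k| <= M.
Proof.
move=> hq qnz se; have [eps eps0 lb] := dhomog_lower_bound hq qnz.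
set C := \sum_(m <- msupp e) `|e@_m|.
have C0 : 0 <= C by apply: sumr_ge0 => m _.
exists (1 + C / eps) => v; rewrite mevalD => qe0 k.
have [i vi] := exists_max_coord v; apply: le_trans (vi k) _.
rewrite leNgt; apply/negP => large.
have N1 : 1 <= `|v i|.
  by apply: le_trans (ltW large); rewrite lerDl divr_ge0 // ltW.
have : eps * `|v i| ^+ d.+1 <= C * `|v i| ^+ d.
  by rewrite (le_trans (lb v i vi)) // -normrN (addr0_eq qe0) meval_norm_le.
rewrite exprS mulrA ler_pM2r ?exprn_gt0 ?(lt_le_trans ltr01 N1) //.
rewrite mulrC -ler_pdivlMr //; move: large; lra.
Qed.

End LowerBound.

Section HessianCurve.
Context {R : realType}.
Implicit Types (f : poly2 R) (a b : R).

Lemma ev2_continuous (p : {mpoly R[2]}) : continuous (fun z : R * R => ev2 p z.1 z.2).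
Proof.
apply: (@meval_continuous 2 R _ (fun z k => if val k == 0%N then z.1 else z.2) p) => k.
by case: (val k == 0%N) => z; [exact: cvg_fst | exact: cvg_snd].
Qed.

Lemma hessian_curve_compact f n : (3 <= n)%N -> msize2 f = n.+1 ->
  ~ has_real_linear_factor (Hess (hpart f n)) -> compact (hessian_curve f).
Proof.
move=> n3 sf nofactor; set fn := hpart f n.
have hfn : fn \is n.-homog := dhomog_hpart f n.
have sfn : (msize fn <= n.+1)%N by apply/msize_leP => m /(dhomog_mf hfn) ->.
have sE := msize_HessD_sub sfn (msize_sub_hpart sf); rewrite subrKC in sE.
have hH := dhomog_Hess hfn.
have d_pos : (0 < n.-2 + n.-2)%N by rewrite addn_gt0 -subn2 subn_gt0 n3.
rewrite -(prednK d_pos) in hH sE.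
have Hfn_neq0 v := no_linear_factor_meval_neq0 (v := v) hH nofactor.
have [M zerosM] := dominant_dhomog_zeros_bounded hH Hfn_neq0 sE.
rewrite subrKC in zerosM.
have sq := @segment_compact R (- M) M.
apply: (subclosed_compact _ (compact_setX sq sq)).
  by have := (continuous_closedP _).1 (ev2_continuous (p := Hess f)) _ (@closed_eq R 0).
by move=> [a b] /zerosM bound; split; rewrite /= in_itv /= -ler_norml;
  [exact: (bound vx) | exact: (bound vy)].
Qed.

Lemma Hf_at_infinity f n a b : msize2 f = n.+1 ->
  Hf f (a, b, 0) = ev2 (Hess (hpart f n)) a b.
Proof. by rewrite /Hf /deg2 eqxx => ->. Qed.

Lemma Hf_affine f a b : Hf f (a, b, 1) = ev2 (Hess f) a b.
Proof. by rewrite /Hf oner_eq0 expr1n mul1r !divr1. Qed.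

Lemma nonorientable_circle (U : set (R * R * R)) :
  (forall a b, a ^+ 2 + b ^+ 2 = 1 -> U (a, b, 0)) -> nonorientable U.
Proof.
move=> Ucircle; exists (fun t => (cos (pi * t), sin (pi * t), 0)); split.
  apply: continuous_subspaceT => t.
  have pit : {for t, continuous (fun t : R => pi * t)}.
    by apply: continuousM; [exact: cvg_cst | exact: cvg_id].
  have zero : {for t, continuous (fun _ : R => 0 : R)} by exact: cvg_cst.
  have cos_pi := continuous_comp pit (@continuous_cos R _).
  have sin_pi := continuous_comp pit (@continuous_sin R _).
  exact: (cvg_pair (cvg_pair cos_pi sin_pi) zero).
split; first by move=> t _; apply: Ucircle; rewrite cos2Dsin2.
by rewrite /= !mulr1 !mulr0 cospi sinpi cos0 sin0 oppr0.
Qed.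

Lemma bminus_Hess_sign f n s a b : msize2 f = n.+1 -> (s = 1 \/ s = -1) ->
  (forall x y, (x != 0) || (y != 0) -> 0 < s * ev2 (Hess (hpart f n)) x y) ->
  bminus f (a, b, 1) -> 0 < s * ev2 (Hess f) a b.
Proof.
move=> sf s1 s_inf [s' [[s'1 [_ orient]] pos]]; rewrite -Hf_affine.
have [<-//|ss'] := eqVneq s' s.
have s's : - s' = s by case: s1 s'1 ss' => -> [] ->; rewrite ?eqxx ?opprK.
exfalso; apply: orient; rewrite s's; apply: nonorientable_circle => x y xy1.
suff : 0 < s * Hf f (x, y, 0) by [].
rewrite (Hf_at_infinity _ _ sf); apply: s_inf.
rewrite -negb_and; apply/negP => /andP [/eqP x0 /eqP y0].
by move: xy1; rewrite x0 y0 expr0n addr0 => /esym/eqP; rewrite oner_eq0.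
Qed.

End HessianCurve.

Theorem theorem2 (R : realType) (f : poly2 R) (n : nat) :
  (3 <= n)%N -> msize2 f = n.+1 ->
  hyperbolic (hpart f n) \/ elliptic (hpart f n) ->
  compact (hessian_curve f) /\
  (hyperbolic (hpart f n) ->
     forall a b : R, bminus f (a, b, 1) -> ev2 (Hess f) a b < 0) /\
  (elliptic (hpart f n) ->
     forall a b : R, bminus f (a, b, 1) -> 0 < ev2 (Hess f) a b).
Proof.
move=> n3 sf hyp; set fn := hpart f n.
have nofactor : ~ has_real_linear_factor (Hess fn) by case: hyp => [[]|[]].
have Hfn_neq0 x y : (x != 0) || (y != 0) -> ev2 (Hess fn) x y != 0.
  exact: no_linear_factor_ev2_neq0 (dhomog_Hess (dhomog_hpart f n)) nofactor.
split; first exact: (hessian_curve_compact n3 sf nofactor).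
split.
- move=> [_ Hfn_le0] a b /(bminus_Hess_sign sf (or_intror erefl)).
  rewrite mulN1r oppr_gt0.
  apply=> x y /Hfn_neq0 xy0.
  by rewrite mulN1r oppr_gt0 lt_neqAle xy0 Hfn_le0.
- move=> [_ Hfn_ge0] a b /(bminus_Hess_sign sf (or_introl erefl)).
  rewrite mul1r.
  apply=> x y /Hfn_neq0 xy0.
  by rewrite mul1r lt_neqAle eq_sym xy0 Hfn_ge0.
Qed.
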